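(* Let $T>0$ and let $\alpha,\beta:\mathbb{R}\to\mathbb{R}$ be continuous $T$-periodic functions such that $\alpha=0$ on $[\tfrac T2,T]$, $\beta=0$ on $[0,\tfrac T2]$, $\alpha(t)>0$ for $t\in(0,\tfrac T2)$ and $\beta(t)>0$ for $t\in(\tfrac T2,T)$. Set $A:=\int_0^T\alpha(t)\,dt$ and $B:=\int_0^T\beta(t)\,dt$, and suppose $AB>4$. Then the system \[ u'=\alpha(t)\,u(1-v),\qquad v'=\beta(t)\,v(-1+u) \] possesses exactly two $2T$-periodic coexistence states with minimal period $2T$.
   Context: A coexistence state is a solution $(u,v)$ defined on $\mathbb{R}$ with $u(t)>0$ and $v(t)>0$ for all $t$. The constant solution $(u,v)=(1,1)$ is the unique $T$-periodic coexistence state. *)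

From Stdlib Require Import Reals.
From Coquelicot Require Import Coquelicot.
Open Scope R_scope.

Definition is_solution (alpha beta : R -> R) (u v : R -> R) : Prop :=
  forall t : R,
    is_derive u t (alpha t * u t * (1 - v t)) /\
    is_derive v t (beta t * v t * (-1 + u t)).

Definition coexistence_state (alpha beta : R -> R) (u v : R -> R) : Prop :=
  is_solution alpha beta u v /\ (forall t, 0 < u t /\ 0 < v t).

Definition is_period_pair (u v : R -> R) (p : R) : Prop :=
  forall t : R, u (t + p) = u t /\ v (t + p) = v t.

Definition minimal_period_pair (u v : R -> R) (p : R) : Prop :=
  0 < p /\ is_period_pair u v p /\
  (forall q : R, 0 < q < p -> ~ is_period_pair u v q).

Definition periodic (f : R -> R) (T : R) : Prop := forall t, f (t + T) = f t.

From Stdlib Require Import Reals Lra ZArith FunctionalExtensionality.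
From Coquelicot Require Import Coquelicot.
Open Scope R_scope.

(* On [0, T/2] beta vanishes, so v is frozen and u solves a linear equation; on [T/2, T]
   the roles are exchanged.  Hence the period-T map is explicit, and a 2T-periodic
   coexistence state through (1 + a, 1 + b) must reach (1 - a, 1 - b) at time T, which
   means a = th (A b) and b = th (B a) with th x = tanh (x / 2).  As th x / x strictly
   decreases on (0, oo), this system has at most one solution with a, b > 0, and it has
   one when AB > 4, because a |-> th (A th (B a)) has slope AB / 4 > 1 at 0 and stays
   below 1.  The solutions (a, b) and (-a, -b) give the two states, which are
   T-translates of each other, while (0, 0) gives the constant state (1, 1), which has
   period T. *)

Lemma is_derive_eq (f : R -> R) x (l l' : R) : is_derive f x l -> l = l' -> is_derive f x l'.
Proof. intros H <-; exact H. Qed.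

Lemma is_derive_0_const (f : R -> R) a b :
  (forall c, a <= c <= b -> is_derive f c 0) -> forall t, a <= t <= b -> f t = f a.
Proof.
  intros Hd t Ht. destruct (Req_dec t a) as [->|Hne]; [reflexivity|].
  destruct (MVT_cor2 f (fun _ => 0) a t) as (c & Hc & _); [lra| |lra].
  intros c Hc. apply is_derive_Reals, Hd. lra.
Qed.

Lemma is_derive_neg_right (f : R -> R) x l : is_derive f x l -> l < 0 ->
  forall c, 0 < c -> exists h, 0 < h < c /\ f (x + h) < f x.
Proof.
  intros Hd Hl c Hc. apply is_derive_Reals in Hd.
  destruct (Hd (- l / 2) ltac:(lra)) as [d Hdh].
  pose proof (cond_pos d) as Hd0.
  set (h := Rmin (d / 2) (c / 2)).
  assert (Hh : 0 < h /\ h <= d / 2 /\ h <= c / 2).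
  { unfold h; split; [apply Rmin_glb_lt; lra | split; [apply Rmin_l | apply Rmin_r]]. }
  exists h; split; [lra|].
  specialize (Hdh h ltac:(lra) ltac:(rewrite Rabs_pos_eq; lra)).
  apply Rabs_def2 in Hdh.
  assert (Hq : f (x + h) - f x = (f (x + h) - f x) / h * h) by (field; lra).
  nra.
Qed.

Lemma periodic_prop_Z (P : R -> Prop) p : (forall t, P t <-> P (t + p)) ->
  forall (z : Z) t, P t <-> P (t + IZR z * p).
Proof.
  intros Hp z. induction z as [|z IH|z IH] using Z.peano_ind; intros t.
  - rewrite Rmult_0_l, Rplus_0_r. tauto.
  - rewrite succ_IZR, (IH t), (Hp (t + IZR z * p)).
    replace (t + IZR z * p + p) with (t + (IZR z + 1) * p) by ring. tauto.
  - rewrite <- Z.sub_1_r, minus_IZR, (IH t), (Hp (t + (IZR z - 1) * p)).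
    replace (t + (IZR z - 1) * p + p) with (t + IZR z * p) by ring. tauto.
Qed.

Lemma periodic_prop_reduce (P : R -> Prop) p : 0 < p -> (forall t, P t <-> P (t + p)) ->
  (forall t, 0 <= t < p -> P t) -> forall t, P t.
Proof.
  intros Hp HP H0 t.
  set (z := (up (t / p) - 1)%Z).
  assert (Hs : 0 <= t - IZR z * p < p).
  { destruct (archimed (t / p)) as [H1 H2].
    assert (Ht : t = t / p * p) by (field; lra).
    unfold z; rewrite minus_IZR. split; nra. }
  replace t with (t - IZR z * p + IZR z * p) by ring.
  apply (periodic_prop_Z P p HP z (t - IZR z * p)), H0, Hs.
Qed.

Lemma ex_RInt_cont (f : R -> R) a b : (forall x, continuous f x) -> ex_RInt f a b.
Proof. intros Hf. apply (@ex_RInt_continuous R_CompleteNormedModule). intros; apply Hf. Qed.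

Lemma RInt_Chasles_cont (f : R -> R) a b c : (forall x, continuous f x) ->
  RInt f a b + RInt f b c = RInt f a c.
Proof. intros Hf. apply (RInt_Chasles f a b c); apply ex_RInt_cont, Hf. Qed.

Lemma RInt_ext_le (f g : R -> R) a b : a <= b -> (forall x, a <= x <= b -> f x = g x) ->
  RInt f a b = RInt g a b.
Proof.
  intros Hab H. apply RInt_ext. intros x [H1 H2].
  rewrite Rmin_left in H1 by lra. rewrite Rmax_right in H2 by lra. apply H; lra.
Qed.

Lemma RInt_null_le (f : R -> R) a b : a <= b -> (forall x, a <= x <= b -> f x = 0) ->
  RInt f a b = 0.
Proof.
  intros Hab H. rewrite (RInt_ext_le f (fun _ => 0) a b Hab H), RInt_const.
  apply Rmult_0_r.
Qed.

Lemma RInt_opp_cont (f : R -> R) a b : (forall x, continuous f x) ->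
  RInt (fun x => - f x) a b = - RInt f a b.
Proof. intros Hf. apply (RInt_opp f a b), ex_RInt_cont, Hf. Qed.

Lemma RInt_periodic_shift (f : R -> R) p a b : (forall x, continuous f x) ->
  (forall x, f (x + p) = f x) -> RInt f (a + p) (b + p) = RInt f a b.
Proof.
  intros Hc Hp.
  assert (E := RInt_comp_lin f 1 p a b (ex_RInt_cont _ _ _ Hc)).
  rewrite !Rmult_1_l in E. rewrite <- E. apply RInt_ext. intros x _.
  unfold scal; simpl; unfold mult; simpl. rewrite !Rmult_1_l. apply Hp.
Qed.

Lemma RInt_primitive_periodic (f : R -> R) p : (forall x, continuous f x) ->
  (forall x, f (x + p) = f x) -> RInt f 0 p = 0 -> forall t, RInt f 0 (t + p) = RInt f 0 t.
Proof.
  intros Hc Hp H0 t.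
  rewrite <- (RInt_Chasles_cont f 0 p (t + p) Hc), H0, Rplus_0_l.
  rewrite <- (Rplus_0_l p) at 1. apply RInt_periodic_shift; assumption.
Qed.

Lemma is_derive_exp_RInt (g : R -> R) a c k t : (forall x, continuous g x) ->
  is_derive (fun s => k * exp (c * RInt g a s)) t (c * g t * (k * exp (c * RInt g a t))).
Proof.
  intros Hg. auto_derive; [|change (RInt (fun x => g x) a t) with (RInt g a t); ring].
  split; [apply ex_RInt_cont, Hg|split; [|exact I]].
  apply filter_forall. intros x. apply continuity_pt_filterlim, Hg.
Qed.

Lemma linear_ode_explicit (f g : R -> R) c a b : (forall x, continuous g x) ->
  (forall s, a <= s <= b -> is_derive f s (c * g s * f s)) ->
  forall t, a <= t <= b -> f t = f a * exp (c * RInt g a t).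
Proof.
  intros Hg Hf t Ht.
  set (w s := f s * (1 * exp (- c * RInt g a s))).
  assert (Hw : w t = w a).
  { apply (is_derive_0_const w a b); [|exact Ht]. intros s Hs.
    eapply is_derive_eq.
    - apply (is_derive_mult f _ s _ _ (Hf s Hs) (is_derive_exp_RInt g a (- c) 1 s Hg)).
      intros; apply Rmult_comm.
    - cbn. ring. }
  unfold w in Hw. rewrite RInt_point in Hw. change (@zero R_NormedModule) with 0 in Hw.
  rewrite Rmult_0_r, exp_0, !Rmult_1_l, Rmult_1_r in Hw. rewrite <- Hw, Rmult_assoc, <- exp_plus.
  replace (- c * RInt g a t + c * RInt g a t) with 0 by ring. rewrite exp_0. ring.
Qed.

Definition tanh_half (x : R) := (1 - exp (- x)) / (1 + exp (- x)).

Lemma tanh_half_0 : tanh_half 0 = 0.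
Proof. unfold tanh_half. rewrite Ropp_0, exp_0. field. Qed.

Lemma tanh_half_opp x : tanh_half (- x) = - tanh_half x.
Proof.
  unfold tanh_half. rewrite Ropp_involutive, exp_Ropp.
  pose proof (exp_pos x). field. lra.
Qed.

Lemma tanh_half_increasing x y : x < y -> tanh_half x < tanh_half y.
Proof.
  intros Hxy. unfold tanh_half.
  assert (exp (- y) < exp (- x)) by (apply exp_increasing; lra).
  pose proof (exp_pos (- x)); pose proof (exp_pos (- y)).
  apply Rlt_div_l; [lra|]. unfold Rdiv. rewrite Rmult_assoc, (Rmult_comm (/ _)).
  rewrite <- Rmult_assoc. apply Rlt_div_r; [lra|]. nra.
Qed.

Lemma tanh_half_pos x : 0 < x -> 0 < tanh_half x.
Proof. intros Hx. rewrite <- tanh_half_0. apply tanh_half_increasing, Hx. Qed.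

Lemma tanh_half_lt_1 x : tanh_half x < 1.
Proof.
  unfold tanh_half. pose proof (exp_pos (- x)).
  apply Rlt_div_l; lra.
Qed.

Lemma tanh_half_spec x : 1 - tanh_half x = (1 + tanh_half x) * exp (- x).
Proof. unfold tanh_half. pose proof (exp_pos (- x)). field. lra. Qed.

Lemma tanh_half_unique b x : 1 - b = (1 + b) * exp (- x) -> b = tanh_half x.
Proof.
  intros H. unfold tanh_half. pose proof (exp_pos (- x)).
  apply (Rmult_eq_reg_r (1 + exp (- x))); [|lra].
  field_simplify; lra.
Qed.

Lemma is_derive_tanh_half x : is_derive tanh_half x (2 * exp (- x) / (1 + exp (- x)) ^ 2).
Proof. unfold tanh_half. pose proof (exp_pos (- x)). auto_derive; [lra|field; lra]. Qed.

Lemma id_lt_sinh x : 0 < x -> x < sinh x.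
Proof.
  intros Hx. unfold sinh.
  destruct (MVT_cor2 (fun s => exp s - exp (- s) - 2 * s) (fun s => exp s + exp (- s) - 2) 0 x)
    as (c & Hc & Hc0); [lra| intros c _; apply is_derive_Reals; auto_derive; [exact I|ring] |].
  rewrite Ropp_0, exp_0 in Hc.
  assert (Hpos : 0 < exp c + exp (- c) - 2).
  { rewrite exp_Ropp. assert (1 < exp c) by (rewrite <- exp_0; apply exp_increasing; lra).
    replace (exp c + / exp c - 2) with ((exp c - 1) ^ 2 / exp c) by (field; lra).
    apply Rdiv_lt_0_compat; nra. }
  assert (0 < (exp c + exp (- c) - 2) * (x - 0)) by (apply Rmult_lt_0_compat; lra).
  lra.
Qed.

(* [tanh_half t / t] decreases on [(0, oo)] because [t * tanh_half' t < tanh_half t]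
   amounts to [t < sinh t]. *)
Lemma tanh_half_div_decreasing x y : 0 < x -> x < y -> x * tanh_half y < y * tanh_half x.
Proof.
  intros Hx Hxy.
  set (g t := tanh_half t / t).
  destruct (MVT_cor2 g
    (fun t => (t * (2 * exp (- t) / (1 + exp (- t)) ^ 2) - tanh_half t) / t ^ 2) x y)
    as (c & Hc & Hcxy); [lra| |].
  { intros c Hc. apply is_derive_Reals. unfold g. pose proof (exp_pos (- c)).
    eapply is_derive_eq.
    - apply (is_derive_mult tanh_half (fun t => / t) c
               (2 * exp (- c) / (1 + exp (- c)) ^ 2) (- / c ^ 2));
        [apply is_derive_tanh_half | auto_derive; [lra | field; lra] | intros; apply Rmult_comm].
    - cbn. field. lra. }
  assert (Hneg : (c * (2 * exp (- c) / (1 + exp (- c)) ^ 2) - tanh_half c) / c ^ 2 < 0).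
  { apply Rdiv_neg_pos; [|nra].
    pose proof (id_lt_sinh c ltac:(lra)) as Hs. unfold sinh, tanh_half in *.
    rewrite exp_Ropp in *. set (e := exp c) in *.
    assert (1 < e) by (unfold e; rewrite <- exp_0; apply exp_increasing; lra).
    replace (c * (2 * / e / (1 + / e) ^ 2) - (1 - / e) / (1 + / e))
      with ((2 * c * e - (e * e - 1)) / (e + 1) ^ 2) by (field; lra).
    apply Rdiv_neg_pos; [|nra].
    replace (e * e - 1) with ((e - / e) * e) by (field; lra). nra. }
  assert (Hg : g y < g x) by nra.
  unfold g in Hg. apply (Rmult_lt_compat_r (x * y)) in Hg; [|nra].
  replace (tanh_half y / y * (x * y)) with (x * tanh_half y) in Hg by (field; lra).
  replace (tanh_half x / x * (x * y)) with (y * tanh_half x) in Hg by (field; lra).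
  exact Hg.
Qed.

Definition reflection_eqs (A B a b : R) := a = tanh_half (A * b) /\ b = tanh_half (B * a).

Lemma reflection_eqs_opp A B a b : reflection_eqs A B a b -> reflection_eqs A B (- a) (- b).
Proof.
  intros [Ea Eb]. split.
  - rewrite Ropp_mult_distr_r_reverse, tanh_half_opp, <- Ea. reflexivity.
  - rewrite Ropp_mult_distr_r_reverse, tanh_half_opp, <- Eb. reflexivity.
Qed.

Lemma reflection_eqs_pos_unique A B a b a' b' : 0 < A -> 0 < B ->
  reflection_eqs A B a b -> reflection_eqs A B a' b' ->
  0 < a -> 0 < b -> 0 < a' -> 0 < b' -> a = a' /\ b = b'.
Proof.
  intros HA HB.
  assert (not_lt : forall x y x' y', reflection_eqs A B x y -> reflection_eqs A B x' y' ->
            0 < x -> 0 < y -> x < x' -> False).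
  { intros x y x' y' [Ex Ey] [Ex' Ey'] Hx Hy Hlt.
    assert (Hyy : y < y') by (rewrite Ey, Ey'; apply tanh_half_increasing, Rmult_lt_compat_l; lra).
    pose proof (tanh_half_div_decreasing (A * y) (A * y')) as HdA.
    pose proof (tanh_half_div_decreasing (B * x) (B * x')) as HdB.
    rewrite <- Ex, <- Ex' in HdA. rewrite <- Ey, <- Ey' in HdB.
    assert (y * x' < y' * x)
      by (apply (Rmult_lt_reg_l A); [lra|]; rewrite <- !Rmult_assoc; apply HdA; nra).
    assert (x * y' < x' * y)
      by (apply (Rmult_lt_reg_l B); [lra|]; rewrite <- !Rmult_assoc; apply HdB; nra).
    lra. }
  intros E E' Ha Hb Ha' Hb'.
  destruct (Rtotal_order a a') as [Hlt|[Heq|Hgt]].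
  - exfalso; exact (not_lt a b a' b' E E' Ha Hb Hlt).
  - split; [exact Heq|]. destruct E as [_ ->], E' as [_ ->]. rewrite Heq. reflexivity.
  - exfalso; exact (not_lt a' b' a b E' E Ha' Hb' Hgt).
Qed.

Lemma reflection_eqs_exists A B : 0 < A -> 0 < B -> 4 < A * B ->
  exists a b, 0 < a /\ 0 < b /\ reflection_eqs A B a b.
Proof.
  intros HA HB HAB.
  set (g a := a - tanh_half (A * tanh_half (B * a))).
  assert (Hd0 : is_derive g 0 (1 - A * B / 4)).
  { unfold g, tanh_half. auto_derive.
    - repeat split; apply Rgt_not_eq, Rplus_lt_0_compat; try lra; apply exp_pos.
    - rewrite !Rmult_0_r, Ropp_0, exp_0. replace (1 + - (1)) with 0 by ring.
      rewrite !Rmult_0_l, !Rmult_0_r, Ropp_0, exp_0. field. }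
  assert (Hg0 : g 0 = 0)
    by (unfold g; rewrite Rmult_0_r, tanh_half_0, Rmult_0_r, tanh_half_0; ring).
  assert (Hc : continuity g).
  { intros a. apply continuity_pt_filterlim, (@ex_derive_continuous R_AbsRing R_NormedModule).
    unfold g, tanh_half. auto_derive.
    repeat split; apply Rgt_not_eq, Rplus_lt_0_compat; try lra; apply exp_pos. }
  destruct (is_derive_neg_right g 0 _ Hd0 ltac:(lra) 1 Rlt_0_1) as (h & Hh & Hgh).
  rewrite Rplus_0_l, Hg0 in Hgh.
  assert (Hg1 : 0 < g 1) by (unfold g; pose proof (tanh_half_lt_1 (A * tanh_half (B * 1))); lra).
  destruct (IVT g h 1 Hc ltac:(lra) Hgh Hg1) as (a & Ha & Ea).
  exists a, (tanh_half (B * a)). split; [lra|]. split; [apply tanh_half_pos; nra|].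
  split; [unfold g in Ea; lra | reflexivity].
Qed.

Lemma is_period_pair_shift (u v : R -> R) p c : is_period_pair u v p ->
  is_period_pair (fun t => u (t + c)) (fun t => v (t + c)) p.
Proof. intros Hper t. replace (t + p + c) with (t + c + p) by ring. apply Hper. Qed.

Lemma minimal_period_pair_shift (u v : R -> R) p c : minimal_period_pair u v p ->
  minimal_period_pair (fun t => u (t + c)) (fun t => v (t + c)) p.
Proof.
  intros (Hp & Hper & Hmin). split; [exact Hp|split].
  - apply is_period_pair_shift, Hper.
  - intros q Hq Hperq. apply (Hmin q Hq). intros t.
    destruct (Hperq (t - c)) as [Eu Ev].
    replace (t - c + q + c) with (t + q) in Eu, Ev by ring.
    replace (t - c + c) with t in Eu, Ev by ring. split; assumption.
Qed.

Definition clip (y : R) := (Rabs (y + 1) - Rabs (y - 1)) / 2.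

Lemma clip_ge_1 y : 1 <= y -> clip y = 1.
Proof. intros Hy. unfold clip. rewrite !Rabs_pos_eq by lra. field. Qed.

Lemma clip_le_m1 y : y <= -1 -> clip y = -1.
Proof. intros Hy. unfold clip. rewrite Rabs_left1, Rabs_left1 by lra. field. Qed.

Lemma cos_gt_half x : - (PI / 4) <= x <= PI / 4 -> 1 / 2 < cos x.
Proof.
  intros Hx. pose proof PI_RGT_0. rewrite <- cos_PI3.
  destruct (Rle_lt_dec 0 x).
  - apply cos_decreasing_1; lra.
  - rewrite <- (cos_neg x). apply cos_decreasing_1; lra.
Qed.

Section Model.

Variables (T : R) (alpha beta : R -> R).
Hypothesis T_pos : 0 < T.
Hypothesis alpha_cont : forall t, continuous alpha t.
Hypothesis beta_cont : forall t, continuous beta t.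
Hypothesis alpha_per : periodic alpha T.
Hypothesis beta_per : periodic beta T.
Hypothesis alpha_off : forall t, T / 2 <= t <= T -> alpha t = 0.
Hypothesis beta_off : forall t, 0 <= t <= T / 2 -> beta t = 0.
Hypothesis alpha_on : forall t, 0 < t < T / 2 -> 0 < alpha t.
Hypothesis beta_on : forall t, T / 2 < t < T -> 0 < beta t.

Local Notation A := (RInt alpha 0 T).
Local Notation B := (RInt beta 0 T).

Lemma RInt_alpha_first_half : RInt alpha 0 (T / 2) = A.
Proof.
  rewrite <- (RInt_Chasles_cont alpha 0 (T / 2) T alpha_cont).
  rewrite (RInt_null_le alpha (T / 2) T); [symmetry; apply Rplus_0_r | lra | exact alpha_off].
Qed.

Lemma RInt_beta_second_half : RInt beta (T / 2) T = B.
Proof.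
  rewrite <- (RInt_Chasles_cont beta 0 (T / 2) T beta_cont).
  rewrite (RInt_null_le beta 0 (T / 2)); [symmetry; apply Rplus_0_l | lra | exact beta_off].
Qed.

Lemma RInt_alpha_pos : 0 < A.
Proof.
  rewrite <- RInt_alpha_first_half.
  apply RInt_gt_0; [lra | exact alpha_on | intros; apply alpha_cont].
Qed.

Lemma RInt_beta_pos : 0 < B.
Proof.
  rewrite <- RInt_beta_second_half.
  apply RInt_gt_0; [lra | exact beta_on | intros; apply beta_cont].
Qed.

Lemma alpha_periodic_2T t : alpha (t + 2 * T) = alpha t.
Proof. replace (t + 2 * T) with (t + T + T) by ring. rewrite !alpha_per. reflexivity. Qed.

Lemma beta_periodic_2T t : beta (t + 2 * T) = beta t.
Proof. replace (t + 2 * T) with (t + T + T) by ring. rewrite !beta_per. reflexivity. Qed.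

Lemma alpha_off_shifted t : 3 * T / 2 <= t <= 2 * T -> alpha t = 0.
Proof. intros Ht. replace t with (t - T + T) by ring. rewrite alpha_per. apply alpha_off. lra. Qed.

Lemma beta_off_shifted t : T <= t <= 3 * T / 2 -> beta t = 0.
Proof. intros Ht. replace t with (t - T + T) by ring. rewrite beta_per. apply beta_off. lra. Qed.

Lemma solution_first_half u v : is_solution alpha beta u v ->
  forall t, 0 <= t <= T / 2 -> v t = v 0 /\ u t = u 0 * exp ((1 - v 0) * RInt alpha 0 t).
Proof.
  intros Hs.
  assert (Hv : forall t, 0 <= t <= T / 2 -> v t = v 0).
  { apply is_derive_0_const. intros c Hc.
    eapply is_derive_eq; [apply (proj2 (Hs c))|]. rewrite beta_off by lra. ring. }
  intros t Ht. split; [exact (Hv t Ht)|].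
  apply (linear_ode_explicit u alpha (1 - v 0) 0 (T / 2) alpha_cont); [|exact Ht].
  intros s Hs'. eapply is_derive_eq; [apply (proj1 (Hs s))|]. rewrite (Hv s Hs'). ring.
Qed.

Lemma solution_second_half u v : is_solution alpha beta u v ->
  forall t, T / 2 <= t <= T ->
    u t = u (T / 2) /\ v t = v (T / 2) * exp ((u (T / 2) - 1) * RInt beta (T / 2) t).
Proof.
  intros Hs.
  assert (Hu : forall t, T / 2 <= t <= T -> u t = u (T / 2)).
  { apply is_derive_0_const. intros c Hc.
    eapply is_derive_eq; [apply (proj1 (Hs c))|]. rewrite alpha_off by lra. ring. }
  intros t Ht. split; [exact (Hu t Ht)|].
  apply (linear_ode_explicit v beta (u (T / 2) - 1) (T / 2) T beta_cont); [|exact Ht].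
  intros s Hs'. eapply is_derive_eq; [apply (proj2 (Hs s))|]. rewrite (Hu s Hs'). ring.
Qed.

Lemma solution_period_map u v : is_solution alpha beta u v ->
  u T = u 0 * exp ((1 - v 0) * A) /\ v T = v 0 * exp ((u T - 1) * B).
Proof.
  intros Hs.
  destruct (solution_first_half u v Hs (T / 2)) as [Hv Hu]; [lra|].
  destruct (solution_second_half u v Hs T) as [Hu' Hv']; [lra|].
  rewrite RInt_alpha_first_half in Hu. rewrite RInt_beta_second_half in Hv'.
  split; [rewrite Hu', Hu | rewrite Hv', Hv, Hu']; reflexivity.
Qed.

Lemma solution_shift u v : is_solution alpha beta u v ->
  is_solution alpha beta (fun t => u (t + T)) (fun t => v (t + T)).
Proof.
  intros Hs t. destruct (Hs (t + T)) as [Hu Hv].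
  rewrite alpha_per in Hu. rewrite beta_per in Hv.
  assert (Hshift : is_derive (fun s => s + T) t 1) by (auto_derive; [exact I | ring]).
  split; eapply is_derive_eq;
    [ apply (is_derive_comp u (fun s => s + T) t _ _ Hu Hshift) | cbn; ring
    | apply (is_derive_comp v (fun s => s + T) t _ _ Hv Hshift) | cbn; ring ].
Qed.

Lemma solutions_agree_on_period u v u' v' :
  is_solution alpha beta u v -> is_solution alpha beta u' v' -> u 0 = u' 0 -> v 0 = v' 0 ->
  forall t, 0 <= t <= T -> u t = u' t /\ v t = v' t.
Proof.
  intros Hs Hs' Eu Ev t Ht.
  destruct (Rle_lt_dec t (T / 2)).
  - destruct (solution_first_half u v Hs t) as [-> ->]; [lra|].
    destruct (solution_first_half u' v' Hs' t) as [-> ->]; [lra|].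
    rewrite Eu, Ev. split; reflexivity.
  - destruct (solution_first_half u v Hs (T / 2)) as [Hv Hu]; [lra|].
    destruct (solution_first_half u' v' Hs' (T / 2)) as [Hv' Hu']; [lra|].
    destruct (solution_second_half u v Hs t) as [-> ->]; [lra|].
    destruct (solution_second_half u' v' Hs' t) as [-> ->]; [lra|].
    rewrite Hu, Hv, Hu', Hv', Eu, Ev. split; reflexivity.
Qed.

Lemma periodic_solution_unique u v u' v' :
  is_solution alpha beta u v -> is_solution alpha beta u' v' ->
  is_period_pair u v (2 * T) -> is_period_pair u' v' (2 * T) -> u 0 = u' 0 -> v 0 = v' 0 ->
  u = u' /\ v = v'.
Proof.
  intros Hs Hs' Hp Hp' Eu Ev.
  assert (Hfirst := solutions_agree_on_period u v u' v' Hs Hs' Eu Ev).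
  destruct (Hfirst T) as [EuT EvT]; [lra|].
  assert (Hsecond := solutions_agree_on_period _ _ _ _
                       (solution_shift u v Hs) (solution_shift u' v' Hs')).
  cbv beta in Hsecond. rewrite !Rplus_0_l in Hsecond. specialize (Hsecond EuT EvT).
  assert (Hall : forall t, u t = u' t /\ v t = v' t).
  { apply (periodic_prop_reduce _ (2 * T)); [lra| |].
    - intros t. destruct (Hp t) as [-> ->]. destruct (Hp' t) as [-> ->]. tauto.
    - intros t Ht. destruct (Rle_lt_dec t T); [apply Hfirst; lra|].
      replace t with (t - T + T) by ring. apply Hsecond. lra. }
  split; apply functional_extensionality; intros t; apply Hall.
Qed.

Lemma periodic_coexistence_reflection u v : coexistence_state alpha beta u v ->
  is_period_pair u v (2 * T) -> reflection_eqs A B (u 0 - 1) (v 0 - 1).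
Proof.
  intros [Hs Hpos] Hp.
  destruct (solution_period_map u v Hs) as [Hu1 Hv1].
  destruct (solution_period_map _ _ (solution_shift u v Hs)) as [Hu2 Hv2].
  cbv beta in Hu2, Hv2. rewrite Rplus_0_l in Hu2, Hv2.
  replace (T + T) with (0 + 2 * T) in Hu2, Hv2 by ring.
  destruct (Hp 0) as [Pu Pv]. rewrite Pu in Hu2, Hv2. rewrite Pv in Hv2.
  destruct (Hpos 0) as [Hu0 Hv0].
  pose proof RInt_alpha_pos as HA. pose proof RInt_beta_pos as HB.
  assert (HvT : v T = 2 - v 0).
  { assert (E : exp ((1 - v 0) * A + (1 - v T) * A) = exp 0).
    { rewrite exp_plus, exp_0. apply (Rmult_eq_reg_l (u 0)); [|lra].
      rewrite <- Rmult_assoc, <- Hu1, <- Hu2. ring. }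
    apply exp_inv in E. nra. }
  assert (HuT : u T = 2 - u 0).
  { assert (E : exp ((u T - 1) * B + (u 0 - 1) * B) = exp 0).
    { rewrite exp_plus, exp_0. apply (Rmult_eq_reg_l (v 0)); [|lra].
      rewrite <- Rmult_assoc, <- Hv1, <- Hv2. ring. }
    apply exp_inv in E. nra. }
  split; apply tanh_half_unique.
  - replace (1 + (u 0 - 1)) with (u 0) by ring.
    replace (- (A * (v 0 - 1))) with ((1 - v 0) * A) by ring. lra.
  - replace (1 + (v 0 - 1)) with (v 0) by ring.
    replace (- (B * (u 0 - 1))) with ((u T - 1) * B) by (rewrite HuT; ring). lra.
Qed.

Lemma reflection_period_map u v a b : is_solution alpha beta u v ->
  u 0 = 1 + a -> v 0 = 1 + b -> reflection_eqs A B a b -> u T = 1 - a /\ v T = 1 - b.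
Proof.
  intros Hs U0 V0 [Ea Eb].
  destruct (solution_period_map u v Hs) as [UT VT].
  assert (UT' : u T = 1 - a).
  { rewrite UT, U0, V0, Ea, tanh_half_spec, <- Ea. f_equal. f_equal. ring. }
  split; [exact UT'|].
  rewrite VT, UT', V0, Eb, tanh_half_spec, <- Eb. f_equal. f_equal. ring.
Qed.

(* Along the orbit through (1 + a, 1 + b), v - 1 = b * switch on the support of alpha
   and u - 1 = a * switch (. - T/2) on that of beta, which decouples the system into the
   two linear equations solved by [usol] and [vsol] below. *)
Definition switch (t : R) : R := clip (2 * cos (PI * (t - T / 4) / T)).

Lemma switch_cont t : continuous switch t.
Proof.
  unfold switch, clip. apply continuity_pt_filterlim. unfold Rdiv at 1.
  apply continuity_pt_mult; [|apply continuity_pt_const; intros ? ?; reflexivity].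
  apply continuity_pt_minus; apply continuity_pt_filterlim;
    [ apply (continuous_Rabs_comp (fun t => 2 * cos (PI * (t - T / 4) / T) + 1))
    | apply (continuous_Rabs_comp (fun t => 2 * cos (PI * (t - T / 4) / T) - 1)) ];
    apply (@ex_derive_continuous R_AbsRing R_NormedModule); auto_derive; lra.
Qed.

Lemma switch_first_half t : 0 <= t <= T / 2 -> switch t = 1.
Proof.
  intros Ht. unfold switch. apply clip_ge_1. pose proof PI_RGT_0.
  set (r := (t - T / 4) / T).
  assert (Er : t - T / 4 = r * T) by (unfold r; field; lra).
  replace (PI * (t - T / 4) / T) with (PI * r) by (unfold r; field; lra).
  assert (1 / 2 < cos (PI * r)) by (apply cos_gt_half; split; nra).
  lra.
Qed.

Lemma switch_third_quarter t : T <= t <= 3 * T / 2 -> switch t = -1.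
Proof.
  intros Ht. unfold switch. apply clip_le_m1. pose proof PI_RGT_0.
  set (r := (t - T / 4) / T).
  assert (Er : t - T / 4 = r * T) by (unfold r; field; lra).
  replace (PI * (t - T / 4) / T) with (PI * (r - 1) + PI) by (unfold r; field; lra).
  rewrite neg_cos.
  assert (1 / 2 < cos (PI * (r - 1))) by (apply cos_gt_half; split; nra).
  lra.
Qed.

Lemma switch_periodic t : switch (t + 2 * T) = switch t.
Proof.
  unfold switch.
  replace (PI * (t + 2 * T - T / 4) / T) with (PI * (t - T / 4) / T + 2 * INR 1 * PI)
    by (simpl; field; lra).
  rewrite cos_period. reflexivity.
Qed.

Lemma alpha_switch_cont t : continuous (fun s : R => alpha s * switch s) t.
Proof.
  apply (@continuous_mult R_UniformSpace R_AbsRing); [apply alpha_cont | apply switch_cont].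
Qed.

Lemma beta_switch_cont t : continuous (fun s : R => beta s * switch (s - T / 2)) t.
Proof.
  apply (@continuous_mult R_UniformSpace R_AbsRing); [apply beta_cont|].
  apply (continuous_comp (fun s => s - T / 2) switch); [|apply switch_cont].
  apply (@ex_derive_continuous R_AbsRing R_NormedModule). auto_derive. exact I.
Qed.

Definition Psi (t : R) : R := RInt (fun s => alpha s * switch s) 0 t.
Definition Theta (t : R) : R := RInt (fun s => beta s * switch (s - T / 2)) 0 t.

Lemma Psi_second_half t : T / 2 <= t <= T -> Psi t = A.
Proof.
  intros Ht. unfold Psi.
  rewrite <- (RInt_Chasles_cont _ 0 (T / 2) t alpha_switch_cont).
  rewrite (RInt_null_le _ (T / 2) t); [|lra | intros; rewrite alpha_off by lra; apply Rmult_0_l].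
  rewrite (RInt_ext_le _ alpha 0 (T / 2));
    [|lra | intros; rewrite switch_first_half by lra; apply Rmult_1_r].
  rewrite RInt_alpha_first_half. apply Rplus_0_r.
Qed.

Lemma Psi_last_quarter t : 3 * T / 2 <= t <= 2 * T -> Psi t = 0.
Proof.
  intros Ht.
  assert (HT := Psi_second_half T ltac:(lra)). unfold Psi in *.
  rewrite <- (RInt_Chasles_cont _ 0 (3 * T / 2) t alpha_switch_cont).
  rewrite <- (RInt_Chasles_cont _ 0 T (3 * T / 2) alpha_switch_cont), HT.
  rewrite (RInt_null_le _ (3 * T / 2) t);
    [|lra | intros; rewrite alpha_off_shifted by lra; apply Rmult_0_l].
  rewrite (RInt_ext_le _ (fun s => - alpha s) T (3 * T / 2));
    [|lra | intros; rewrite switch_third_quarter by lra; ring].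
  rewrite RInt_opp_cont by exact alpha_cont.
  replace (RInt alpha T (3 * T / 2)) with (RInt alpha (0 + T) (T / 2 + T)) by (f_equal; field).
  rewrite RInt_periodic_shift, RInt_alpha_first_half by assumption. ring.
Qed.

Lemma Theta_first_half t : 0 <= t <= T / 2 -> Theta t = 0.
Proof.
  intros Ht. apply RInt_null_le; [lra|]. intros s Hs. rewrite beta_off by lra. apply Rmult_0_l.
Qed.

Lemma Theta_third_quarter t : T <= t <= 3 * T / 2 -> Theta t = B.
Proof.
  intros Ht.
  assert (Hhalf := Theta_first_half (T / 2) ltac:(lra)). unfold Theta in *.
  rewrite <- (RInt_Chasles_cont _ 0 T t beta_switch_cont).
  rewrite <- (RInt_Chasles_cont _ 0 (T / 2) T beta_switch_cont), Hhalf.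
  rewrite (RInt_null_le _ T t); [|lra | intros; rewrite beta_off_shifted by lra; apply Rmult_0_l].
  rewrite (RInt_ext_le _ beta (T / 2) T);
    [|lra | intros; rewrite switch_first_half by lra; apply Rmult_1_r].
  rewrite RInt_beta_second_half. ring.
Qed.

Lemma Theta_2T : Theta (2 * T) = 0.
Proof.
  assert (H3 := Theta_third_quarter (3 * T / 2) ltac:(lra)). unfold Theta in *.
  rewrite <- (RInt_Chasles_cont _ 0 (3 * T / 2) (2 * T) beta_switch_cont), H3.
  rewrite (RInt_ext_le _ (fun s => - beta s) (3 * T / 2) (2 * T));
    [|lra | intros; rewrite switch_third_quarter by lra; ring].
  rewrite RInt_opp_cont by exact beta_cont.
  replace (RInt beta (3 * T / 2) (2 * T)) with (RInt beta (T / 2 + T) (T + T)) by (f_equal; field).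
  rewrite RInt_periodic_shift, RInt_beta_second_half by assumption. ring.
Qed.

Lemma Psi_periodic t : Psi (t + 2 * T) = Psi t.
Proof.
  apply RInt_primitive_periodic; [exact alpha_switch_cont | | apply Psi_last_quarter; lra].
  intros s. rewrite alpha_periodic_2T, switch_periodic. reflexivity.
Qed.

Lemma Theta_periodic t : Theta (t + 2 * T) = Theta t.
Proof.
  apply RInt_primitive_periodic; [exact beta_switch_cont | | exact Theta_2T].
  intros s. replace (s + 2 * T - T / 2) with (s - T / 2 + 2 * T) by ring.
  rewrite beta_periodic_2T, switch_periodic. reflexivity.
Qed.

Definition usol (a b t : R) : R := (1 + a) * exp (- b * Psi t).
Definition vsol (a b t : R) : R := (1 + b) * exp (- a * Theta t).

Lemma explicit_initial a b : usol a b 0 = 1 + a /\ vsol a b 0 = 1 + b.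
Proof.
  unfold usol, vsol, Psi, Theta. rewrite !RInt_point. change (@zero R_NormedModule) with 0.
  rewrite !Rmult_0_r, exp_0, !Rmult_1_r. split; reflexivity.
Qed.

Lemma explicit_period a b : is_period_pair (usol a b) (vsol a b) (2 * T).
Proof. intros t. unfold usol, vsol. rewrite Psi_periodic, Theta_periodic. split; reflexivity. Qed.

Lemma alpha_vsol a b : reflection_eqs A B a b ->
  forall t, alpha t * (1 - vsol a b t) = - b * (alpha t * switch t).
Proof.
  intros [_ Eb]. apply (periodic_prop_reduce _ (2 * T)); [lra | |].
  - intros t. unfold vsol. rewrite alpha_periodic_2T, switch_periodic, Theta_periodic. tauto.
  - intros t Ht. unfold vsol.
    destruct (Rle_lt_dec t (T / 2));
      [|destruct (Rle_lt_dec t T); [|destruct (Rle_lt_dec t (3 * T / 2))]].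
    + rewrite Theta_first_half, switch_first_half by lra. rewrite Rmult_0_r, exp_0. ring.
    + rewrite alpha_off by lra. ring.
    + rewrite Theta_third_quarter, switch_third_quarter by lra.
      replace (- a * B) with (- (B * a)) by ring. rewrite Eb, <- tanh_half_spec. ring.
    + rewrite alpha_off_shifted by lra. ring.
Qed.

Lemma beta_usol a b : reflection_eqs A B a b ->
  forall t, beta t * (-1 + usol a b t) = - a * (beta t * switch (t - T / 2)).
Proof.
  intros [Ea _]. apply (periodic_prop_reduce _ (2 * T)); [lra | |].
  - intros t. unfold usol. replace (t + 2 * T - T / 2) with (t - T / 2 + 2 * T) by ring.
    rewrite beta_periodic_2T, switch_periodic, Psi_periodic. tauto.
  - intros t Ht. unfold usol.
    destruct (Rle_lt_dec t (T / 2));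
      [|destruct (Rle_lt_dec t T); [|destruct (Rle_lt_dec t (3 * T / 2))]].
    + rewrite beta_off by lra. ring.
    + rewrite Psi_second_half, switch_first_half by lra.
      replace (- b * A) with (- (A * b)) by ring. rewrite Ea, <- tanh_half_spec. ring.
    + rewrite beta_off_shifted by lra. ring.
    + rewrite Psi_last_quarter, switch_third_quarter by lra. rewrite Rmult_0_r, exp_0. ring.
Qed.

Lemma explicit_solution a b : reflection_eqs A B a b ->
  is_solution alpha beta (usol a b) (vsol a b).
Proof.
  intros E t. split; eapply is_derive_eq.
  - unfold usol, Psi. apply (is_derive_exp_RInt _ 0 (- b) (1 + a) t alpha_switch_cont).
  - rewrite <- (alpha_vsol a b E t). unfold usol, Psi. ring.
  - unfold vsol, Theta. apply (is_derive_exp_RInt _ 0 (- a) (1 + b) t beta_switch_cont).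
  - rewrite <- (beta_usol a b E t). unfold vsol, Theta. ring.
Qed.

Lemma periodic_solution_v_on_second_period u v :
  is_solution alpha beta u v -> is_period_pair u v (2 * T) ->
  (forall t, T <= t <= 3 * T / 2 -> v t = v T) /\
  (forall t, 3 * T / 2 <= t <= 2 * T ->
     v t = v T * exp ((u 0 - 1) * RInt beta (T / 2) (t - T))).
Proof.
  intros Hs Hp. pose proof (solution_shift u v Hs) as Hs2.
  assert (Hthird : forall t, T <= t <= 3 * T / 2 -> v t = v T).
  { intros t Ht. destruct (solution_first_half _ _ Hs2 (t - T)) as [Hv _]; [lra|].
    cbv beta in Hv. rewrite Rplus_0_l in Hv. replace (t - T + T) with t in Hv by ring.
    exact Hv. }
  split; [exact Hthird|]. intros t Ht.
  destruct (solution_second_half _ _ Hs2 (t - T)) as [_ Hv]; [lra|].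
  destruct (solution_second_half _ _ Hs2 T) as [Hu _]; [lra|].
  cbv beta in Hv, Hu. replace (t - T + T) with t in Hv by ring.
  replace (T + T) with (0 + 2 * T) in Hu by ring. rewrite (proj1 (Hp 0)) in Hu.
  rewrite Hv, <- Hu, (Hthird (T / 2 + T)) by lra. reflexivity.
Qed.

Lemma reflection_minimal_period u v a b : is_solution alpha beta u v ->
  is_period_pair u v (2 * T) -> reflection_eqs A B a b -> 0 < a -> 0 < b ->
  u 0 = 1 + a -> v 0 = 1 + b -> minimal_period_pair u v (2 * T).
Proof.
  intros Hs Hp E Ha Hb U0 V0. split; [lra | split; [exact Hp|]].
  intros q Hq Hpq. destruct (Hpq 0) as [Uq Vq]. rewrite Rplus_0_l in Uq, Vq.
  destruct (reflection_period_map u v a b Hs U0 V0 E) as [UT VT].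
  destruct (periodic_solution_v_on_second_period u v Hs Hp) as [Vthird Vlast].
  destruct (Rle_lt_dec q (T / 2));
    [|destruct (Rle_lt_dec q T); [|destruct (Rle_lt_dec q (3 * T / 2))]].
  - destruct (solution_first_half u v Hs q) as [_ Uq']; [lra|].
    assert (0 < RInt alpha 0 q)
      by (apply RInt_gt_0; [lra | intros; apply alpha_on; lra | intros; apply alpha_cont]).
    assert (Hexp : exp ((1 - v 0) * RInt alpha 0 q) < exp 0)
      by (apply exp_increasing; rewrite V0; nra).
    rewrite exp_0 in Hexp. rewrite Uq, U0 in Uq'. nra.
  - destruct (solution_second_half u v Hs q) as [Uq' _]; [lra|].
    destruct (solution_second_half u v Hs T) as [UT' _]; [lra|].
    lra.
  - rewrite Vthird in Vq by lra. lra.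
  - rewrite Vlast, VT, U0 in Vq by lra.
    assert (Hlt : RInt beta (T / 2) (q - T) < B).
    { rewrite <- RInt_beta_second_half, <- (RInt_Chasles_cont beta (T / 2) (q - T) T beta_cont).
      assert (0 < RInt beta (q - T) T)
        by (apply RInt_gt_0; [lra | intros; apply beta_on; lra | intros; apply beta_cont]).
      lra. }
    assert (exp ((1 + a - 1) * RInt beta (T / 2) (q - T)) < exp (B * a))
      by (apply exp_increasing; nra).
    destruct E as [_ Eb].
    assert (Hb1 : b < 1) by (rewrite Eb; apply tanh_half_lt_1).
    assert (Hspec : (1 - b) * exp (B * a) = 1 + b).
    { rewrite Eb, tanh_half_spec, Rmult_assoc, <- exp_plus.
      replace (- (B * a) + B * a) with 0 by ring. rewrite exp_0. ring. }
    nra.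
Qed.

Lemma explicit_coexistence a b : reflection_eqs A B a b -> 0 < a -> 0 < b ->
  coexistence_state alpha beta (usol a b) (vsol a b) /\
  minimal_period_pair (usol a b) (vsol a b) (2 * T).
Proof.
  intros E Ha Hb. pose proof (explicit_solution a b E) as Hs.
  destruct (explicit_initial a b) as [U0 V0].
  split; [split; [exact Hs|] |].
  - intros t. unfold usol, vsol. split; apply Rmult_lt_0_compat; try lra; apply exp_pos.
  - exact (reflection_minimal_period _ _ a b Hs (explicit_period a b) E Ha Hb U0 V0).
Qed.

Lemma coexistence_state_shift u v : coexistence_state alpha beta u v ->
  coexistence_state alpha beta (fun t => u (t + T)) (fun t => v (t + T)).
Proof. intros [Hs Hpos]. split; [exact (solution_shift u v Hs) | intros t; apply Hpos]. Qed.

Lemma explicit_orbits_distinct a b : reflection_eqs A B a b -> 0 < a ->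
  (usol a b, vsol a b) <> (fun t => usol a b (t + T), fun t => vsol a b (t + T)).
Proof.
  intros E Ha Heq. injection Heq as Eu _.
  destruct (explicit_initial a b) as [U0 V0].
  destruct (reflection_period_map _ _ a b (explicit_solution a b E) U0 V0 E) as [UT _].
  apply (f_equal (fun f => f 0)) in Eu. rewrite Rplus_0_l, U0, UT in Eu. lra.
Qed.

Lemma coexistence_2T_classification a b u v : reflection_eqs A B a b -> 0 < a -> 0 < b ->
  coexistence_state alpha beta u v -> minimal_period_pair u v (2 * T) ->
  (u, v) = (usol a b, vsol a b) \/
  (u, v) = (fun t => usol a b (t + T), fun t => vsol a b (t + T)).
Proof.
  intros E Ha Hb Hc (_ & Hp & Hmin).
  pose proof (periodic_coexistence_reflection u v Hc Hp) as E'.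
  destruct Hc as [Hs _].
  pose proof RInt_alpha_pos as HA. pose proof RInt_beta_pos as HB.
  pose proof (explicit_solution a b E) as Hs1. pose proof (explicit_period a b) as Hp1.
  destruct (explicit_initial a b) as [U0 V0].
  destruct (Rtotal_order (u 0 - 1) 0) as [Hneg | [Hzero | Hpos]].
  - right.
    pose proof (reflection_eqs_opp _ _ _ _ E') as E''.
    assert (0 < - (v 0 - 1)) by (destruct E'' as [_ ->]; apply tanh_half_pos; nra).
    destruct (reflection_eqs_pos_unique _ _ _ _ _ _ HA HB E E'') as [Ea Eb]; try lra.
    destruct (reflection_period_map _ _ a b Hs1 U0 V0 E) as [UT VT].
    destruct (periodic_solution_unique u v _ _ Hs (solution_shift _ _ Hs1) Hp
                (is_period_pair_shift _ _ _ T Hp1)) as [-> ->];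
      [rewrite Rplus_0_l; lra | rewrite Rplus_0_l; lra | reflexivity].
  - exfalso.
    assert (Hv0 : v 0 - 1 = 0)
      by (destruct E' as [_ ->]; rewrite Hzero, Rmult_0_r; apply tanh_half_0).
    assert (Hconst : is_solution alpha beta (fun _ => 1) (fun _ => 1)).
    { intros t. split; eapply is_derive_eq; try apply is_derive_const; cbn; ring. }
    destruct (periodic_solution_unique u v _ _ Hs Hconst Hp) as [-> ->];
      [now intros t | lra | lra |].
    apply (Hmin T); [lra|]. intros t. split; reflexivity.
  - left.
    assert (0 < v 0 - 1) by (destruct E' as [_ ->]; apply tanh_half_pos; nra).
    destruct (reflection_eqs_pos_unique _ _ _ _ _ _ HA HB E E') as [Ea Eb]; try lra.
    destruct (periodic_solution_unique u v _ _ Hs Hs1 Hp Hp1) as [-> ->]; [lra | lra | reflexivity].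
Qed.

End Model.

Theorem theorem2p1 (T : R) (alpha beta : R -> R) :
  0 < T ->
  (forall t, continuous alpha t) -> (forall t, continuous beta t) ->
  periodic alpha T -> periodic beta T ->
  (forall t, T / 2 <= t <= T -> alpha t = 0) ->
  (forall t, 0 <= t <= T / 2 -> beta t = 0) ->
  (forall t, 0 < t < T / 2 -> 0 < alpha t) ->
  (forall t, T / 2 < t < T -> 0 < beta t) ->
  RInt alpha 0 T * RInt beta 0 T > 4 ->
  exists (u1 v1 u2 v2 : R -> R),
    (coexistence_state alpha beta u1 v1 /\ minimal_period_pair u1 v1 (2 * T)) /\
    (coexistence_state alpha beta u2 v2 /\ minimal_period_pair u2 v2 (2 * T)) /\
    (u1, v1) <> (u2, v2) /\
    (forall u v : R -> R,
       coexistence_state alpha beta u v -> minimal_period_pair u v (2 * T) ->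
       (u, v) = (u1, v1) \/ (u, v) = (u2, v2)).
Proof.
  intros HT Ha_cont Hb_cont Ha_per Hb_per Ha_off Hb_off Ha_on Hb_on HAB.
  assert (HA : 0 < RInt alpha 0 T) by (apply RInt_alpha_pos; assumption).
  assert (HB : 0 < RInt beta 0 T) by (apply RInt_beta_pos; assumption).
  destruct (reflection_eqs_exists _ _ HA HB ltac:(lra)) as (a & b & Ha & Hb & E).
  assert (Hexplicit : coexistence_state alpha beta (usol T alpha a b) (vsol T beta a b) /\
                      minimal_period_pair (usol T alpha a b) (vsol T beta a b) (2 * T))
    by (apply explicit_coexistence; assumption).
  destruct Hexplicit as [Hc Hm].
  exists (usol T alpha a b), (vsol T beta a b),
    (fun t => usol T alpha a b (t + T)), (fun t => vsol T beta a b (t + T)).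
  split; [split; assumption|].
  split; [split; [apply coexistence_state_shift | apply minimal_period_pair_shift]; assumption|].
  split; [apply explicit_orbits_distinct; assumption|].
  intros u v Hcu Hmu. apply coexistence_2T_classification; assumption.
Qed.
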